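(* Let $\mathcal{G}=(V,\mathcal{E})$ be a strongly connected digraph with $n$ nodes and let $\tau\in\mathbb{Z}_{>0}$ be an attack duration that is nontrivial for $\mathcal{G}$, i.e. $\tau\ge D$, where $D$ is the diameter of $\mathcal{G}$, and $\tau$ is strictly smaller than the length of every closed walk in $\mathcal{G}$ that starts and ends at the same vertex and visits every vertex at least once. Then the value of the game satisfies $\mathbb{V}\le \frac{\tau}{n}$.
   Context: A Markov chain strategy conforming to $\mathcal{G}$ is a matrix $P=(p_{ij})\in\mathbb{R}^{n\times n}$ with $P\mathbb{1}_n=\mathbb{1}_n$, $p_{ij}\ge 0$ for $(i,j)\in\mathcal{E}$ and $p_{ij}=0$ for $(i,j)\notin\mathcal{E}$. For a Markov chain $(X_k)_{k\ge0}$ with transition matrix $P$, the first hitting time from $i$ to $j$ is $T_{ij}=\min\{k\ge 1: X_k=j\}$ given $X_0=i$ (so $T_{ii}$ is the first return time). The value of the game is $\mathbb{V}=\max_{P}\min_{i,j\in V}\mathbb{P}(T_{ij}(P)\le\tau)$, the maximum taken over all Markov chain strategies $P$ conforming to $\mathcal{G}$. *)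

From mathcomp Require Import all_boot all_order all_algebra.
Set Implicit Arguments. Unset Strict Implicit. Unset Printing Implicit Defensive.
Import Order.TTheory GRing.Theory Num.Theory.
Local Open Scope ring_scope.

Definition strongly_connected (n : nat) (E : rel 'I_n) : Prop :=
  forall i j : 'I_n, connect E i j.

Definition walk_len (n : nat) (E : rel 'I_n) (k : nat) (i j : 'I_n) : Prop :=
  exists s : seq 'I_n, [/\ path E i s, last i s = j & size s = k].

Definition diameter_le (n : nat) (E : rel 'I_n) (d : nat) : Prop :=
  forall i j : 'I_n, exists2 k, (k <= d)%N & walk_len E k i j.

(* A closed walk x, s_1, ..., s_L = x visiting every vertex; its length is L. *)
Definition closed_covering_walk (n : nat) (E : rel 'I_n) (x : 'I_n) (s : seq 'I_n) : Prop :=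
  [/\ path E x s, last x s = x & forall v : 'I_n, v \in x :: s].

Definition nontrivial_duration (n : nat) (E : rel 'I_n) (tau : nat) : Prop :=
  diameter_le E tau /\
  forall (x : 'I_n) (s : seq 'I_n), closed_covering_walk E x s -> (tau < size s)%N.

Definition conforming (R : realFieldType) (n : nat) (E : rel 'I_n) (P : 'M[R]_n) : Prop :=
  [/\ forall i : 'I_n, \sum_(j < n) P i j = 1,
      forall i j : 'I_n, E i j -> 0 <= P i j
    & forall i j : 'I_n, ~~ E i j -> P i j = 0].

(* P(T_ij <= tau) for the chain with transition matrix P started at X_0 = i:
   sum, over trajectories (X_0, ..., X_tau) with X_0 = i, of the probability
   of the trajectory, restricted to those with X_k = j for some 1 <= k <= tau. *)
Definition hit_prob (R : realFieldType) (n : nat) (P : 'M[R]_n) (i j : 'I_n) (tau : nat) : R :=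
  \sum_(y : {ffun 'I_tau.+1 -> 'I_n} |
          (y ord0 == i) && [exists k : 'I_tau.+1, (0 < k)%N && (y k == j)])
     \prod_(k < tau) P (y (inord k)) (y (inord k.+1)).

(* min_{i,j in V} P(T_ij(P) <= tau)  (probabilities are <= 1, so 1 is a neutral start). *)
Definition min_hit_prob (R : realFieldType) (n : nat) (P : 'M[R]_n) (tau : nat) : R :=
  \big[Num.min/1]_(ij : 'I_n * 'I_n) hit_prob P ij.1 ij.2 tau.

From mathcomp Require Import all_boot all_order all_algebra zify.
Set Implicit Arguments. Unset Strict Implicit. Unset Printing Implicit Defensive.
Import Order.TTheory GRing.Theory Num.Theory.
Local Open Scope ring_scope.

(* A trajectory X_0, ..., X_tau started at i visits at most tau
   distinct vertices at the times 1, ..., tau, so summing over j gives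
   sum_j P(T_ij <= tau) = E[#{X_1, ..., X_tau}] <= tau.  Hence some j has
   P(T_ij <= tau) <= tau / n, whatever the strategy P. *)

Definition traj_weight (R : pzSemiRingType) (n t : nat) (P : 'M[R]_n)
    (y : {ffun 'I_t.+1 -> 'I_n}) : R :=
  \prod_(k < t) P (y (inord k)) (y (inord k.+1)).

Definition traj_snoc (n t : nat) (p : {ffun 'I_t.+1 -> 'I_n} * 'I_n) :
    {ffun 'I_t.+2 -> 'I_n} :=
  [ffun k : 'I_t.+2 => if (k < t.+1)%N then p.1 (inord k) else p.2].

Definition traj_unsnoc (n t : nat) (y : {ffun 'I_t.+2 -> 'I_n}) :
    {ffun 'I_t.+1 -> 'I_n} * 'I_n :=
  ([ffun k : 'I_t.+1 => y (inord k)], y (inord t.+1)).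

Lemma traj_snocK n t : cancel (@traj_snoc n t) (@traj_unsnoc n t).
Proof.
case=> z a; rewrite /traj_unsnoc /traj_snoc /=; congr pair.
- apply/ffunP=> k; rewrite !ffunE inordK ?ltn_ord ?(leqW (ltn_ord k)) //.
  by congr (z _); apply/val_inj; rewrite /= inordK.
- by rewrite ffunE inordK // ltnn.
Qed.

Lemma traj_unsnocK n t : cancel (@traj_unsnoc n t) (@traj_snoc n t).
Proof.
move=> y; apply/ffunP=> k; rewrite /traj_unsnoc /traj_snoc ffunE /=.
have lt_k := ltn_ord k.
case: ifP => hk; rewrite ?ffunE; congr (y _); apply/val_inj;
  rewrite /= !inordK //; lia.
Qed.

Lemma traj_snoc0 n t (p : {ffun 'I_t.+1 -> 'I_n} * 'I_n) :
  traj_snoc p ord0 = p.1 ord0.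
Proof.
by rewrite /traj_snoc ffunE /=; congr (p.1 _); apply/val_inj; rewrite /= inordK.
Qed.

Lemma traj_weight_snoc (R : pzSemiRingType) n t (P : 'M[R]_n)
    (p : {ffun 'I_t.+1 -> 'I_n} * 'I_n) :
  traj_weight P (traj_snoc p) = traj_weight P p.1 * P (p.1 (inord t)) p.2.
Proof.
rewrite /traj_weight big_ord_recr /=; congr (_ * _).
  apply: eq_bigr => k _; have lt_k := ltn_ord k.
  rewrite /traj_snoc !ffunE /= !inordK ?ifT; try lia.
  by congr (P (p.1 _) (p.1 _)); apply/val_inj; rewrite /= !inordK //; lia.
rewrite /traj_snoc !ffunE !inordK // ltnSn ltnn.
by congr (P (p.1 _) _); apply/val_inj; rewrite /= !inordK.
Qed.

Lemma sum_traj_weight (R : pzSemiRingType) n (P : 'M[R]_n)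
    (P_stoch : forall i, \sum_(j < n) P i j = 1) t (i : 'I_n) :
  \sum_(y : {ffun 'I_t.+1 -> 'I_n} | y ord0 == i) traj_weight P y = 1.
Proof.
elim: t i => [|t IHt] i.
  rewrite (big_pred1 [ffun=> i]); first by rewrite /traj_weight big_ord0.
  move=> y /=; apply/eqP/eqP => [<-|->]; last by rewrite ffunE.
  by apply/ffunP=> k; rewrite ffunE (ord1 k).
rewrite (reindex (@traj_snoc n t)); last first.
  by apply/onW_bij/(Bijective (@traj_snocK n t) (@traj_unsnocK n t)).
under eq_bigl do rewrite traj_snoc0.
under eq_bigr do rewrite traj_weight_snoc.
transitivity (\sum_(z : {ffun 'I_t.+1 -> 'I_n} | z ord0 == i)
                \sum_(a < n) traj_weight P z * P (z (inord t)) a).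
  by rewrite pair_big_dep; apply: eq_bigl => p; rewrite andbT.
rewrite -[RHS](IHt i); apply: eq_bigr => z _.
by rewrite -mulr_sumr P_stoch mulr1.
Qed.

Lemma conforming_ge0 (R : realFieldType) n (E : rel 'I_n) (P : 'M[R]_n) :
  conforming E P -> forall i j, 0 <= P i j.
Proof.
by case=> _ P_ge0 P_eq0 i j; case: (boolP (E i j)) => [/P_ge0|/P_eq0->].
Qed.

Lemma card_visited_le n t (y : {ffun 'I_t.+1 -> 'I_n}) :
  (#|[pred j | [exists k : 'I_t.+1, (0 < k)%N && (y k == j)]]| <= t)%N.
Proof.
apply: leq_trans (_ : #|codom (fun k : 'I_t => y (inord k.+1))| <= t)%N.
  apply/subset_leq_card/subsetP => j; rewrite inE.
  case/existsP=> k /andP[k_gt0 /eqP <-].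
  have lt_k : (k.-1 < t)%N by have := ltn_ord k; lia.
  apply/codomP; exists (Ordinal lt_k); congr (y _); apply/val_inj.
  by rewrite /= prednK // inordK.
by rewrite (leq_trans (card_size _)) // size_codom card_ord.
Qed.

Lemma sum_hit_prob_le (R : realFieldType) n (P : 'M[R]_n)
    (P_stoch : forall i, \sum_(j < n) P i j = 1) (P_ge0 : forall i j, 0 <= P i j)
    tau (i : 'I_n) :
  \sum_(j < n) hit_prob P i j tau <= tau%:R.
Proof.
rewrite /hit_prob; under eq_bigr do rewrite big_mkcondr /=.
rewrite exchange_big /=.
apply: le_trans (_ : _ <= \sum_(y : {ffun 'I_tau.+1 -> 'I_n} | y ord0 == i)
                            tau%:R * traj_weight P y) _.
  2: by rewrite -mulr_sumr sum_traj_weight // mulr1.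
apply: ler_sum => y _; rewrite -big_mkcond sumr_const /= mulr_natl.
by apply: ler_wpMn2l; [exact: prodr_ge0 | exact: card_visited_le].
Qed.

Lemma min_hit_prob_le_sum (R : realFieldType) n (P : 'M[R]_n) tau (i : 'I_n) :
  n%:R * min_hit_prob P tau <= \sum_(j < n) hit_prob P i j tau.
Proof.
have -> : n%:R = \sum_(j < n) (1 : R) by rewrite sumr_const card_ord.
rewrite mulr_suml; apply: ler_sum => j _; rewrite mul1r.
exact: (bigmin_le _ (i, j)).
Qed.

(* The bound holds for every duration tau. *)
Theorem theorem1 (R : realFieldType) (n : nat) (E : rel 'I_n) (tau : nat)
  (n_pos : (0 < n)%N) (sc : strongly_connected E) (tau_pos : (0 < tau)%N)
  (nt : nontrivial_duration E tau) :
  forall P : 'M[R]_n, conforming E P -> min_hit_prob P tau <= tau%:R / n%:R.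
Proof.
move=> P P_conf; have [P_stoch _ _] := P_conf.
have i0 : 'I_n := Ordinal n_pos.
rewrite ler_pdivlMr ?ltr0n // mulrC.
apply: le_trans (min_hit_prob_le_sum P tau i0) _.
exact: sum_hit_prob_le P_stoch (conforming_ge0 P_conf) tau i0.
Qed.
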